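(* Consider the multiobjective optimal control setting, Assumption A and Algorithm 1 described in the context, and let $x_0\in\mathbb{X}_N$. Then every closed-loop trajectory $x(\cdot)=x_\mu(\cdot,x_0)$ driven by the feedback $\mu^N$ from Algorithm 1 converges to the equilibrium $x^e$, and $\widetilde{\ell}_1(x(k),\mu^N(k,x(k)))\to0$ as $k\to\infty$.
   Context: Let $f:\mathbb{R}^n\times\mathbb{R}^m\to\mathbb{R}^n$ be continuous and consider $x(k+1)=f(x(k),u(k))$, $x(0)=x_0$; $x_{\mathbf{u}}(k,x_0)$ denotes the solution for control sequence $\mathbf u$. Let $\mathbb{X}\subseteq\mathbb{R}^n$, $\mathbb{U}\subseteq\mathbb{R}^m$, $\mathbb{X}_0\subseteq\mathbb{X}$ be nonempty; horizons $N\ge2$, objectives $s\ge2$. $\mathbb{U}^N(x_0)$ is the set of $\mathbf{u}\in\mathbb{U}^N$ with $x_{\mathbf{u}}(k,x_0)\in\mathbb{X}$ for $k=1,\dots,N-1$ and $x_{\mathbf{u}}(N,x_0)\in\mathbb{X}_0$; $\mathbb{X}_N=\{x_0\in\mathbb{X}:\mathbb{U}^N(x_0)\neq\emptyset\}$. With stage costs $\ell_i:\mathbb{X}\times\mathbb{U}\to\mathbb{R}$ ($i=1,\dots,s$) and continuous $F_1:\mathbb{X}_0\to\mathbb{R}_{\ge0}$: $J_1^N(x_0,\mathbf{u})=\sum_{k=0}^{N-1}\ell_1(x_{\mathbf{u}}(k,x_0),u(k))+F_1(x_{\mathbf{u}}(N,x_0))$, $J_i^N(x_0,\mathbf{u})=\sum_{k=0}^{N-1}\ell_i(x_{\mathbf{u}}(k,x_0),u(k))$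 for $i\ge2$. $\mathbf{u}^\star\in\mathbb{U}^N(x_0)$ is efficient if no $\mathbf{u}\in\mathbb{U}^N(x_0)$ satisfies $J_i^N(x_0,\mathbf{u})\le J_i^N(x_0,\mathbf{u}^\star)$ for all $i$ with strict inequality for some $i$; $\mathbb{U}^N_{\mathcal P}(x_0)$ denotes the efficient set. $\mathcal{J}^N(x_0)$ is the set of vectors $(J_i^N(x_0,\mathbf u))_{i=1}^s$, $\mathbf u\in\mathbb{U}^N(x_0)$, and $\mathcal{J}^N_{\mathcal P}(x_0)$ the subset for efficient $\mathbf u$; external stability means every $y\in\mathcal{J}^N(x_0)$ dominates componentwise some $y_{\mathcal P}\in\mathcal{J}^N_{\mathcal P}(x_0)$. $\mathcal K_\infty$: continuous strictly increasing unbounded functions $\mathbb{R}_{\ge0}\to\mathbb{R}_{\ge0}$ vanishing at $0$. Assumption A: (i) $(x^e,u^e)\in\mathbb{X}\times\mathbb{U}$ with $f(x^e,u^e)=x^e$; (ii) $\lambda_1:\mathbb{X}\to\mathbb{R}$ bounded below, $\lambda_1(x^e)=0$, $\alpha_{\ell,1}\in\mathcal K_\infty$ with $\ell_1(x,u)-\ell_1(x^e,u^e)+\lambda_1(x)-\lambda_1(f(x,u))\ge\alpha_{\ell,1}(\|x-x^e\|+\|u-u^e\|)$ on $\mathbb{X}\times\mathbb{U}$; (iii) all $\ell_i$ continuous; (iv) $x^e\in\mathbb{X}_0$ and $\kappa:\mathbb{X}_0\to\mathbb{U}$ with $f(x,\kappa(x))\in\mathbb{X}_0$ and $F_1(f(x,\kappa(x)))+\ell_1(x,\kappa(x))\le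 F_1(x)+\ell_1(x^e,u^e)$ for all $x\in\mathbb{X}_0$; (v) $\mathcal{J}^N_{\mathcal P}(x)$ externally stable for $\mathcal{J}^N(x)$ for all $x\in\mathbb{X}_N$. Algorithm 1 ($k\in\mathbb N_0$): $x(0)=x_0$, choose any $\mathbf{u}^\star_{x(0)}\in\mathbb{U}^N_{\mathcal P}(x(0))$; for $k\ge1$ choose $\mathbf{u}^\star_{x(k)}\in\mathbb{U}^N_{\mathcal P}(x(k))$ with $J_1^N(x(k),\mathbf{u}^\star_{x(k)})\le J_1^N(x(k),\mathbf{u}_{x(k)})$, where $\mathbf{u}_{x(k+1)}:=(u^\star_{x(k)}(1),\dots,u^\star_{x(k)}(N-1),\kappa(x_{\mathbf{u}^\star_{x(k)}}(N,x(k))))$. Feedback $\mu^N(k,x(k)):=u^\star_{x(k)}(0)$, $x(k+1)=f(x(k),\mu^N(k,x(k)))$, $x_\mu(k,x_0):=x(k)$. Rotated stage cost: $\widetilde\ell_1(x,u)=\ell_1(x,u)-\ell_1(x^e,u^e)+\lambda_1(x)-\lambda_1(f(x,u))$. *)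

From HB Require Import structures.
From mathcomp Require Import all_boot all_order all_algebra.
From mathcomp Require Import all_classical all_reals all_analysis.
Set Implicit Arguments. Unset Strict Implicit. Unset Printing Implicit Defensive.
Import Order.TTheory GRing.Theory Num.Theory.
Import numFieldNormedType.Exports.
Local Open Scope classical_set_scope.
Local Open Scope ring_scope.

Section MOC.
Variables (R : realType) (n m : nat).
Notation state := 'rV[R]_n.
Notation ctrl := 'rV[R]_m.
Variable f : state -> ctrl -> state.

Fixpoint traj (u : nat -> ctrl) (x0 : state) (k : nat) : state :=
  match k with
  | 0%N => x0
  | k'.+1 => f (traj u x0 k') (u k')
  end.

Variables (X : set state) (U : set ctrl) (X0 : set state) (N : nat).

(* U^N(x0): control sequences (only the first N entries u(0..N-1) matter) *)
Definition admissible (x0 : state) (u : nat -> ctrl) : Prop :=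
  (forall k, (k < N)%N -> U (u k)) /\
  (forall k, (1 <= k)%N -> (k <= N.-1)%N -> X (traj u x0 k)) /\
  X0 (traj u x0 N).

Definition feasible_set : set state :=
  [set x0 | X x0 /\ exists u, admissible x0 u].

Variables (s : nat) (ell : 'I_s -> state -> ctrl -> R) (F1 : state -> R).

(* J_i^N ; objective index i : 'I_s, with val i = 0 the first objective *)
Definition J (i : 'I_s) (x0 : state) (u : nat -> ctrl) : R :=
  \sum_(k < N) ell i (traj u x0 k) (u k) +
  (if val i == 0%N then F1 (traj u x0 N) else 0).

Definition efficient (x0 : state) (u : nat -> ctrl) : Prop :=
  admissible x0 u /\
  ~ (exists v, admissible x0 v /\ (forall i, J i x0 v <= J i x0 u) /\
                 (exists i, J i x0 v < J i x0 u)).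

Definition externally_stable (x0 : state) : Prop :=
  forall u, admissible x0 u ->
    exists up, efficient x0 up /\ forall i, J i x0 up <= J i x0 u.

(* u_{x(k+1)} built from u*_{x(k)} at state x(k) *)
Definition shifted_seq (kappa : state -> ctrl) (x : state) (us : nat -> ctrl)
  : nat -> ctrl :=
  fun k => if (k < N.-1)%N then us k.+1 else kappa (traj us x N).

End MOC.

Definition Kinf (R : realType) (a : R -> R) : Prop :=
  a 0 = 0 /\
  {within [set x : R | 0 <= x], continuous a} /\
  (forall x y, 0 <= x -> x < y -> a x < a y) /\
  (forall M, exists x, 0 <= x /\ M < a x) /\
  (forall x, 0 <= x -> 0 <= a x).

Definition rotated_cost (R : realType) (n m : nat)
  (f : 'rV[R]_n -> 'rV[R]_m -> 'rV[R]_n) (ell1 : 'rV[R]_n -> 'rV[R]_m -> R)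
  (lambda1 : 'rV[R]_n -> R) (xe : 'rV[R]_n) (ue : 'rV[R]_m)
  (x : 'rV[R]_n) (u : 'rV[R]_m) : R :=
  ell1 x u - ell1 xe ue + lambda1 x - lambda1 (f x u).

From HB Require Import structures.
From mathcomp Require Import all_boot all_order all_algebra.
From mathcomp Require Import all_classical all_reals all_analysis.
From mathcomp Require Import lra zify.
Set Implicit Arguments. Unset Strict Implicit. Unset Printing Implicit Defensive.
Import Order.TTheory GRing.Theory Num.Theory.
Import numFieldNormedType.Exports.
Local Open Scope classical_set_scope.
Local Open Scope ring_scope.

(* The rotated value V(k) = J_1^N(x(k), u*_{x(k)}) + lambda_1(x(k)) is a
   Lyapunov function of the closed loop: the candidate u_{x(k+1)} of
   Algorithm 1 together with the terminal condition (iv) gives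
   V(k+1) + rotated_cost(x(k), mu(k)) <= V(k), and dissipativity (ii) makes the
   rotated cost nonnegative and V bounded below.  Hence the rotated costs are
   summable and tend to 0, and the K_inf lower bound alpha_1 then forces
   x(k) -> x^e. *)

Section Descent.
Variable R : realType.

Lemma descent_cvg0 (r V : nat -> R) (c : R) :
  (forall k, 0 <= r k) -> (forall k, V k.+1 + r k <= V k) ->
  (forall k, c <= V k) -> r @ \oo --> 0.
Proof.
move=> r_ge0 V_desc V_lb; apply: cvg_series_cvg_0; apply: nondecreasing_is_cvgn.
  by move=> a b; apply: nondecreasing_series => k _ _; apply: r_ge0.
have partial_sum K : series r K <= V 0%N - V K.
  elim: K => [|K IH]; first by rewrite /series /= big_geq ?subrr.
  by rewrite /series /= big_nat_recr //=; have := V_desc K; rewrite /series /= in IH; lra.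
exists (V 0%N - c) => _ [K _ <-].
by have := partial_sum K; have := V_lb K; lra.
Qed.

Lemma Kinf_le (a : R -> R) (x y : R) : Kinf a -> 0 <= x -> x <= y -> a x <= a y.
Proof.
case=> _ [_ [a_mono _]] x_ge0; rewrite le_eqVlt => /orP [/eqP -> //| xy].
exact/ltW/a_mono.
Qed.

Lemma Kinf_cvg (V : normedModType R) (T : Type) (F : set_system T) {FF : Filter F}
    (a : R -> R) (y : T -> V) (ye : V) (r : T -> R) :
  Kinf a -> (forall t, a `|y t - ye| <= r t) -> r @ F --> 0 -> y @ F --> ye.
Proof.
move=> Ka ay_le r0; apply/cvgrPdist_lt => e e_gt0.
have [a0 [_ [a_mono _]]] := Ka.
have ae_gt0 : 0 < a e by rewrite -a0; apply: a_mono.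
move/cvgrPdist_lt: r0 => /(_ _ ae_gt0); apply: filterS => t.
rewrite sub0r normrN distrC => rt_lt; rewrite ltNge; apply/negP => e_le.
have := Kinf_le Ka (ltW e_gt0) e_le; have := ay_le t.
have := ler_norm (r t); lra.
Qed.

End Descent.

Section Trajectories.
Variables (R : realType) (n m : nat) (f : 'rV[R]_n -> 'rV[R]_m -> 'rV[R]_n).
Variables (X : set 'rV[R]_n) (U : set 'rV[R]_m) (X0 : set 'rV[R]_n) (N : nat).

Lemma admissible_trajX (x0 : 'rV[R]_n) (u : nat -> 'rV[R]_m) (k : nat) :
  X0 `<=` X -> X x0 -> admissible f X U X0 N x0 u -> (k <= N)%N ->
  X (traj f u x0 k).
Proof.
move=> X0X Xx0 [_ [u_X u_X0]] kN.
case: k kN => [//|k] kN.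
have [->|kN'] := eqVneq k.+1 N; first exact: X0X.
by apply: u_X => //; lia.
Qed.

Lemma traj_shifted_seq (kappa : 'rV[R]_n -> 'rV[R]_m) (x0 : 'rV[R]_n)
    (u : nat -> 'rV[R]_m) (j : nat) : (j <= N.-1)%N ->
  traj f (shifted_seq f N kappa x0 u) (f x0 (u 0%N)) j = traj f u x0 j.+1.
Proof.
elim: j => [//|j IH] jN.
by rewrite /= IH ?(ltnW jN) // /shifted_seq jN.
Qed.

Lemma sum_rotated_cost (l : 'rV[R]_n -> 'rV[R]_m -> R) (lambda : 'rV[R]_n -> R)
    (xe : 'rV[R]_n) (ue : 'rV[R]_m) (u : nat -> 'rV[R]_m) (x0 : 'rV[R]_n) (K : nat) :
  \sum_(k < K) l (traj f u x0 k) (u k) =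
  \sum_(k < K) rotated_cost f l lambda xe ue (traj f u x0 k) (u k) +
  K%:R * l xe ue + lambda (traj f u x0 K) - lambda x0.
Proof.
elim: K => [|K IH]; first by rewrite !big_ord0 mul0r /=; lra.
rewrite !big_ord_recr IH /rotated_cost /= -natr1; lra.
Qed.

End Trajectories.

Section RotatedValue.
Variables (R : realType) (n m : nat) (f : 'rV[R]_n -> 'rV[R]_m -> 'rV[R]_n).
Variables (X : set 'rV[R]_n) (U : set 'rV[R]_m) (X0 : set 'rV[R]_n) (N s : nat).
Variables (ell : 'I_s -> 'rV[R]_n -> 'rV[R]_m -> R) (F1 : 'rV[R]_n -> R).
Variables (i0 : 'I_s) (lambda : 'rV[R]_n -> R) (xe : 'rV[R]_n) (ue : 'rV[R]_m).
Variable kappa : 'rV[R]_n -> 'rV[R]_m.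
Hypothesis i0_first : val i0 = 0%N.

Local Notation J1 := (J f N ell F1 i0).
Local Notation rot := (rotated_cost f (ell i0) lambda xe ue).

Lemma J1E (x0 : 'rV[R]_n) (u : nat -> 'rV[R]_m) :
  J1 x0 u = \sum_(k < N) ell i0 (traj f u x0 k) (u k) + F1 (traj f u x0 N).
Proof. by rewrite /J i0_first. Qed.

Lemma J1_shifted_seq (x0 : 'rV[R]_n) (u : nat -> 'rV[R]_m) : (0 < N)%N ->
  let z := traj f u x0 N in
  J1 (f x0 (u 0%N)) (shifted_seq f N kappa x0 u) =
  J1 x0 u - ell i0 x0 (u 0%N) - F1 z + ell i0 z (kappa z) + F1 (f z (kappa z)).
Proof.
move=> N_gt0 z; rewrite {}/z.
have [N' eN] : exists N', N = N'.+1 by exists N.-1; rewrite prednK.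
rewrite !J1E eN.
set u' := shifted_seq f N'.+1 kappa x0 u; set z := traj f u x0 N'.+1.
have shift j : (j <= N')%N -> traj f u' (f x0 (u 0%N)) j = traj f u x0 j.+1.
  exact: (@traj_shifted_seq R n m f N'.+1).
have u'_lt j : (j < N')%N -> u' j = u j.+1 by rewrite /u' /shifted_seq => ->.
have u'_N : u' N' = kappa z by rewrite /u' /shifted_seq ltnn.
have -> : traj f u' (f x0 (u 0%N)) N'.+1 = f z (kappa z).
  by rewrite [LHS]/= shift // u'_N.
rewrite [in LHS]big_ord_recr [in RHS]big_ord_recl /= shift // u'_N -/z.
have -> : \sum_(j < N') ell i0 (traj f u' (f x0 (u 0%N)) j) (u' j) =
          \sum_(j < N') ell i0 (traj f u x0 (lift ord0 j)) (u (lift ord0 j)).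
  by apply: eq_bigr => j _; rewrite lift0 shift 1?ltnW // u'_lt.
lra.
Qed.

Hypothesis kappa_descent : forall x, X0 x ->
  F1 (f x (kappa x)) + ell i0 x (kappa x) <= F1 x + ell i0 xe ue.

Lemma rotated_value_decrease (x0 : 'rV[R]_n) (u : nat -> 'rV[R]_m) :
  (0 < N)%N -> admissible f X U X0 N x0 u ->
  J1 (f x0 (u 0%N)) (shifted_seq f N kappa x0 u) + lambda (f x0 (u 0%N)) +
  rot x0 (u 0%N) <= J1 x0 u + lambda x0.
Proof.
move=> N_gt0 [_ [_ uN]]; rewrite J1_shifted_seq //.
by have := kappa_descent uN; rewrite /rotated_cost; lra.
Qed.

Variable c : R.
Hypotheses (lambda_lb : forall x, X x -> c <= lambda x)
  (F1_ge0 : forall x, X0 x -> 0 <= F1 x) (X0_sub : X0 `<=` X)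
  (rot_ge0 : forall x v, X x -> U v -> 0 <= rot x v).

Lemma rotated_value_lb (x0 : 'rV[R]_n) (u : nat -> 'rV[R]_m) :
  X x0 -> admissible f X U X0 N x0 u ->
  N%:R * ell i0 xe ue + c <= J1 x0 u + lambda x0.
Proof.
move=> Xx0 adm; have [u_U [_ uN]] := adm.
rewrite J1E (sum_rotated_cost f (ell i0) lambda xe ue).
have : 0 <= \sum_(k < N) rot (traj f u x0 k) (u k).
  apply: sumr_ge0 => k _; apply: rot_ge0; last exact: u_U.
  exact: admissible_trajX X0_sub Xx0 adm (ltnW (ltn_ord k)).
have := lambda_lb (X0_sub uN); have := F1_ge0 uN; lra.
Qed.

End RotatedValue.

Theorem corollary4p3 (R : realType) (n m : nat)
  (f : 'rV[R]_n -> 'rV[R]_m -> 'rV[R]_n)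
  (X : set 'rV[R]_n) (U : set 'rV[R]_m) (X0 : set 'rV[R]_n)
  (N s : nat) (ell : 'I_s -> 'rV[R]_n -> 'rV[R]_m -> R) (F1 : 'rV[R]_n -> R)
  (hf : continuous (fun p : 'rV[R]_n * 'rV[R]_m => f p.1 p.2))
  (hX : X !=set0) (hU : U !=set0) (hX0ne : X0 !=set0) (hX0X : X0 `<=` X)
  (hN : (2 <= N)%N) (hs : (2 <= s)%N)
  (hF1c : {within X0, continuous F1}) (hF1p : forall x, X0 x -> 0 <= F1 x)
  (* Assumption A *)
  (xe : 'rV[R]_n) (ue : 'rV[R]_m) (lambda1 : 'rV[R]_n -> R) (alpha1 : R -> R)
  (kappa : 'rV[R]_n -> 'rV[R]_m)
  (i0 : 'I_s) (hi0 : val i0 = 0%N)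
  (hAi : X xe /\ U ue /\ f xe ue = xe)
  (hAii : (exists c : R, forall x, X x -> c <= lambda1 x) /\ lambda1 xe = 0 /\
          Kinf alpha1 /\
          forall x u, X x -> U u ->
            rotated_cost f (ell i0) lambda1 xe ue x u >=
              alpha1 (`|x - xe| + `|u - ue|))
  (hAiii : forall i, {within [set p | X p.1 /\ U p.2],
                       continuous (fun p : 'rV[R]_n * 'rV[R]_m => ell i p.1 p.2)})
  (hAiv : X0 xe /\ forall x, X0 x ->
            U (kappa x) /\ X0 (f x (kappa x)) /\
            F1 (f x (kappa x)) + ell i0 x (kappa x) <= F1 x + ell i0 xe ue)
  (hAv : forall x, feasible_set f X U X0 N x ->
           externally_stable f X U X0 N ell F1 x)
  (* Algorithm 1 *)
  (x0 : 'rV[R]_n) (hx0 : feasible_set f X U X0 N x0)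
  (x : nat -> 'rV[R]_n) (ustar : nat -> nat -> 'rV[R]_m)
  (hx_init : x 0%N = x0)
  (hx_step : forall k, x k.+1 = f (x k) (ustar k 0%N))
  (hu_eff : forall k, efficient f X U X0 N ell F1 (x k) (ustar k))
  (hu_J1 : forall k, (1 <= k)%N ->
     J f N ell F1 i0 (x k) (ustar k) <=
     J f N ell F1 i0 (x k) (shifted_seq f N kappa (x k.-1) (ustar k.-1))) :
  x @ \oo --> xe /\
  (fun k => rotated_cost f (ell i0) lambda1 xe ue (x k) (ustar k 0%N)) @ \oo --> 0.
Proof.
have [[c lambda_lb] [_ [Ka rot_ge_alpha]]] := hAii.
have [_ kappa_ok] := hAiv.
have N_gt0 : (0 < N)%N by apply: leq_trans hN.
have adm k : admissible f X U X0 N (x k) (ustar k) by case: (hu_eff k).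
have U_u0 k : U (ustar k 0%N) by case: (adm k) => [+ _]; apply.
have Xx k : X (x k).
  elim: k => [|k IH]; first by rewrite hx_init; case: hx0.
  rewrite hx_step; exact: (admissible_trajX hX0X IH (adm k) N_gt0).
have rot_ge0 y v : X y -> U v -> 0 <= rotated_cost f (ell i0) lambda1 xe ue y v.
  move=> Xy Uv; apply: le_trans (rot_ge_alpha y v Xy Uv).
  by have [_ [_ [_ [_ ->]]]] := Ka; rewrite ?addr_ge0.
set r := fun k => rotated_cost f (ell i0) lambda1 xe ue (x k) (ustar k 0%N).
have r_cvg : r @ \oo --> 0.
  apply: (@descent_cvg0 _ _ (fun k => J f N ell F1 i0 (x k) (ustar k) + lambda1 (x k))
            (N%:R * ell i0 xe ue + c)) => [k|k|k].
  - exact: rot_ge0 (Xx k) (U_u0 k).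
  - have := hu_J1 k.+1 isT; rewrite /= hx_step.
    have kappa_descent y : X0 y -> _ := fun X0y => (kappa_ok y X0y).2.2.
    have := rotated_value_decrease lambda1 hi0 kappa_descent N_gt0 (adm k).
    by rewrite /r; lra.
  - exact: (rotated_value_lb hi0 lambda_lb hF1p hX0X rot_ge0 (Xx k) (adm k)).
split => //; apply: (Kinf_cvg Ka _ r_cvg) => k.
apply: le_trans (rot_ge_alpha _ _ (Xx k) (U_u0 k)).
by apply: Kinf_le Ka _ _; rewrite ?lerDl.
Qed.
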